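(* Let $(F_{\mathfrak A},\phi_{\mathfrak A,\mathfrak B})$ be an $S_n$-equivariant strict system of sheaves on $X^n$. Then $d_{n,k-1}\circ d_{n,k}=0$ for all $k$.
   Context: $X$ is a complex quasi-projective scheme with a torus $\mathbb T$-action; ''sheaf'' means $\mathbb T$-equivariant, cohomologically $\mathbb Z/2$-graded coherent sheaf. $[n]=\{1,\dots,n\}$; subsets of $[n]$ carry the binary total order ($A\le B$ iff $\sum_{i\in A}2^i\le\sum_{i\in B}2^i$). Strict system: set partitions of $[n]$ are ordered by refinement; for a set partition $\mathfrak D$, $(X^n)_{\mathfrak D}=\{(x_i):x_i=x_j\iff i,j\text{ in the same block of }\mathfrak D\}$; $\mathfrak A\cap\mathfrak B$ is the partition into nonempty intersections of blocks; $U_{\mathfrak A,\mathfrak B}=\bigcup\{(X^n)_{\mathfrak D}:\mathfrak A\cap\mathfrak D=\mathfrak B\cap\mathfrak D\}$. The system consists of sheaves $F_{\mathfrak A}$ on $X^n$ and homomorphisms $\phi_{\mathfrak A,\mathfrak B}:F_{\mathfrak A}\to F_{\mathfrak B}$ for $\mathfrak A\le\mathfrak B$ with $\phi_{\mathfrak B,\mathfrak C}\phi_{\mathfrak A,\mathfrak B}=\phi_{\mathfrak A,\mathfrak C}$, $\phi_{\mathfrak A,\mathfrak A}=\mathrm{id}$, $\phi_{\mathfrak A,\mathfrak B}|_{U_{\mathfrak A,\mathfrak B}}$ an isomorphism, together with compatible $S_n$-equivariance isomorphisms $(\sigma_X^{-1})^*F_{\mathfrak A}\cong F_{\sigma^{-1}\mathfrak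 A}$. Index trees: an index tree of order $n$ is a rooted tree whose nodes are leaves or have at least two children, with subsets $L_v\subseteq[n]$ at the leaves forming a set partition of $[n]$; for non-leaf $v$, $L_v$ is the union of the labels of leaves below $v$; trees are identified with $L(T)=\{L_v\}$. $\mathfrak A(T)$ is the set of leaf labels, $P(T)$ the set of non-leaf labels, $F_T=F_{\mathfrak A(T)}$, $\mathcal T_{n,k}$ the set of index trees with $k$ non-leaf nodes, and $G_{n,k}=\bigoplus_{T\in\mathcal T_{n,k}}F_T$. Contractions: for a non-leaf, non-root node $v$, $O(T,v)$ deletes $v$ and attaches its children to its parent (labels unchanged). A node is exceptional if it is not a leaf and all its children are leaves; for exceptional $v$, $E(T,v)$ deletes all children of $v$. For a non-leaf node $v$, $s(v)=(-1)^l$ with $l$ the number of $L\in P(T)$ with $L<L_v$. Define $o(T,v)=s(v)\,\mathrm{id}:F_T\to F_{O(T,v)}$ (note $\mathfrak A(O(T,v))=\mathfrak A(T)$) and $e(T,v)=-s(v)\phi_{\mathfrak A(T),\mathfrak A(E(T,v))}:F_T\to F_{E(T,v)}$. The map $d_{n,k}:G_{n,k}\to G_{n,k-1}$ is the sum of all $o(T,v)$ (over $T\in\mathcal T_{n,k}$, $v$ non-leaf non-root) and all $e(T,v)$ (over $T\in\mathcal T_{n,k}$, $v$ exceptional). *)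

From HB Require Import structures.
From mathcomp Require Import all_boot all_order all_algebra.
Set Implicit Arguments. Unset Strict Implicit. Unset Printing Implicit Defensive.
Import GRing.Theory Num.Theory.
Local Open Scope ring_scope.

(* An abstract preadditive category (Ab-enriched category).  The category  *)
(* of T-equivariant Z/2-graded coherent sheaves on X^n is an instance; no  *)
Record preadditive := Preadditive {
  obj :> Type;
  mor : obj -> obj -> zmodType;
  mcomp : forall a b c : obj, mor b c -> mor a b -> mor a c;
  idm : forall a : obj, mor a a;
  comp_addl : forall a b c (g1 g2 : mor b c) (f : mor a b),
      mcomp (g1 + g2) f = mcomp g1 f + mcomp g2 f;
  comp_addr : forall a b c (g : mor b c) (f1 f2 : mor a b),
      mcomp g (f1 + f2) = mcomp g f1 + mcomp g f2;
  comp_assoc : forall a b c d (h : mor c d) (g : mor b c) (f : mor a b),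
      mcomp h (mcomp g f) = mcomp (mcomp h g) f;
  comp_idl : forall a b (f : mor a b), mcomp (idm b) f = f;
  comp_idr : forall a b (f : mor a b), mcomp f (idm a) = f
}.

(* [n] = {1..n} is modelled by 'I_n = {0..n-1} (shift by one). *)

(* (Shifting indices by one multiplies codes by 2: same order.)          *)
Definition bcode n (A : {set 'I_n}) : nat := (\sum_(i in A) 2 ^ i)%N.
Definition blt n (A B : {set 'I_n}) : bool := (bcode A < bcode B)%N.

Definition set_partition n (P : {set {set 'I_n}}) : bool := partition P setT.

Definition refines n (A B : {set {set 'I_n}}) : bool :=
  [forall a in A, exists b in B, a \subset b].

(* Index trees, identified with their label sets L(T). *)
Definition minimal_in n (L : {set {set 'I_n}}) (A : {set 'I_n}) : bool :=
  [forall B in L, (B \subset A) ==> (B == A)].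

Definition is_index_tree n (L : {set {set 'I_n}}) : bool :=
  [&& set0 \notin L, setT \in L,
      [forall A in L, forall B in L,
         [|| A \subset B, B \subset A | [disjoint A & B]]] &
      [forall A in L,
         A == \bigcup_(B in L | minimal_in L B && (B \subset A)) B]].

Definition leaves n (L : {set {set 'I_n}}) : {set {set 'I_n}} :=
  [set A in L | minimal_in L A].
Definition nonleaves n (L : {set {set 'I_n}}) : {set {set 'I_n}} :=
  L :\: leaves L.

Definition children n (L : {set {set 'I_n}}) (v : {set 'I_n}) : {set {set 'I_n}} :=
  [set B in L | (B \proper v) &&
     [forall C in L, (B \proper C) ==> ~~ (C \proper v)]].

Definition exceptional n (L : {set {set 'I_n}}) (v : {set 'I_n}) : bool :=
  (v \in nonleaves L) && (children L v \subset leaves L).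

Definition trees n (k : nat) : {set {set {set 'I_n}}} :=
  [set L | is_index_tree L && (#|nonleaves L| == k)].

Definition Ocontr n (L : {set {set 'I_n}}) (v : {set 'I_n}) := L :\ v.
Definition Econtr n (L : {set {set 'I_n}}) (v : {set 'I_n}) := L :\: children L v.

Definition sgn n (L : {set {set 'I_n}}) (v : {set 'I_n}) : int :=
  (-1) ^+ #|[set B in nonleaves L | blt B v]|.

(* The component F_T -> F_T' of d_{n,k}: sum of all o(T,v) with O(T,v)=T'
   and all e(T,v) with E(T,v)=T'.  Since A(O(T,v)) = A(T) and
   phi_{A,A} = id, o(T,v) = s(v) id is written s(v) phi_{A(T),A(T')}. *)
Definition dcomp (C : preadditive) n (F : {set {set 'I_n}} -> C)
    (phi : forall A B, mor (F A) (F B))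
    (T T' : {set {set 'I_n}}) : mor (F (leaves T)) (F (leaves T')) :=
  (\sum_(v in nonleaves T | (v != setT) && (T' == Ocontr T v))
      phi (leaves T) (leaves T') *~ sgn T v)
  + (\sum_(v in nonleaves T | exceptional T v && (T' == Econtr T v))
      phi (leaves T) (leaves T') *~ (- sgn T v)).

(* Strict system (functoriality part). *)
Definition strict_system (C : preadditive) n (F : {set {set 'I_n}} -> C)
    (phi : forall A B, mor (F A) (F B)) : Prop :=
  (forall A, set_partition A -> phi A A = idm (F A)) /\
  (forall A B D, set_partition A -> set_partition B -> set_partition D ->
     refines A B -> refines B D ->
     mcomp (phi B D) (phi A B) = phi A D).

From HB Require Import structures.
From mathcomp Require Import all_boot all_order all_algebra.
From mathcomp Require Import ring zify.
Import GRing.Theory Num.Theory.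
Set Implicit Arguments. Unset Strict Implicit. Unset Printing Implicit Defensive.
Local Open Scope ring_scope.

(* Each entry of d o d is phi_{A(T),A(T'')} times an integer: phi is functorial
   along the refinements A(T) <= A(T') <= A(T'') that contractions produce.  That
   integer is a signed count of two-step contraction paths T -> T' -> T'', and the
   paths cancel in pairs.  Contractions at distinct nodes v, w commute, and swapping
   their order flips the sign because exactly one of L_v < L_w, L_w < L_v holds in
   the binary order.  The one exception, an E-contraction at w after a contraction
   at v strictly below w, is matched instead with the path that contracts v the
   other way (O instead of E or conversely): both paths delete every label below w,
   and they differ only in the sign -1 carried by e. *)

Lemma sum_involution_opp (R : numDomainType) (I : finType) (P : pred I)
    (F : I -> R) (f : I -> I) :
  involutive f -> (forall x, P x -> P (f x) /\ F (f x) = - F x) ->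
  \sum_(x | P x) F x = 0.
Proof.
move=> fK fP; apply/eqP; rewrite -eqNr -sumrN (reindex_inj (inv_inj fK)) /=.
have Pf x : P (f x) = P x by apply/idP/idP => [/fP[]|/fP[]//]; rewrite fK.
rewrite (eq_bigl P) => [|x]; last exact: Pf.
by apply/eqP/eq_bigr => x /fP[_ ->]; rewrite opprK.
Qed.

Section IndexTrees.
Variable n : nat.
Implicit Types (L T : {set {set 'I_n}}) (A B C v : {set 'I_n}).

Lemma minimalP L A :
  reflect (forall B, B \in L -> B \subset A -> B = A) (minimal_in L A).
Proof.
apply: (iffP forall_inP) => mA B BL; first by move=> sBA; apply/eqP/(implyP (mA B BL)).
by apply/implyP => sBA; apply/eqP/mA.
Qed.

Lemma not_minimal_proper L A :
  ~~ minimal_in L A -> exists2 B, B \in L & B \proper A.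
Proof.
case/forall_inPn => B BL; rewrite negb_imply => /andP[sBA neBA].
by exists B; rewrite // properEneq neBA.
Qed.

Lemma leavesE L A : (A \in leaves L) = (A \in L) && minimal_in L A.
Proof. by rewrite inE. Qed.

Lemma nonleavesE L A : (A \in nonleaves L) = (A \in L) && ~~ minimal_in L A.
Proof. by rewrite !inE andbC; case: (A \in L). Qed.

Lemma leaves_mem L A : A \in leaves L -> A \in L.
Proof. by rewrite leavesE => /andP[]. Qed.

Lemma nonleaves_mem L A : A \in nonleaves L -> A \in L.
Proof. by rewrite nonleavesE => /andP[]. Qed.

Lemma leaf_minimal L A B : A \in leaves L -> B \in L -> ~~ (B \proper A).
Proof.
rewrite leavesE => /andP[_ /minimalP mA] BL; apply/negP; rewrite properEneq.
by case/andP => neBA sBA; rewrite (mA B BL sBA) eqxx in neBA.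
Qed.

Lemma disjoint_sub0 A B C :
  [disjoint A & B] -> C \subset A -> C \subset B -> C = set0.
Proof.
rewrite -setI_eq0 => /eqP AB0 sCA sCB; apply/eqP.
by rewrite -subset0 -AB0 subsetI sCA sCB.
Qed.

Definition laminar L := forall A B, A \in L -> B \in L ->
  [|| A \subset B, B \subset A | [disjoint A & B]].

Definition covered_by_leaves L := forall A x, A \in L -> x \in A ->
  exists2 B, B \in leaves L & (x \in B) && (B \subset A).

Lemma index_treeP L :
  reflect [/\ set0 \notin L, setT \in L, laminar L & covered_by_leaves L]
    (is_index_tree L).
Proof.
apply: (iffP and4P) => [[L0 LT /forall_inP lamL /forall_inP covL]|[L0 LT lamL covL]].
  split=> // [A B AL BL | A x AL xA]; first exact: (forall_inP (lamL A AL)).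
  rewrite (eqP (covL A AL)) in xA; case/bigcupP: xA => B /andP[BL /andP[mB sBA]] xB.
  by exists B; rewrite ?leavesE ?BL ?xB.
split=> //; first by apply/forall_inP => A AL; apply/forall_inP => B BL; apply: lamL.
apply/forall_inP => A AL; apply/eqP/setP => x; apply/idP/bigcupP => [xA|[B]].
  case: (covL A x AL xA) => B; rewrite leavesE => /andP[BL mB] /andP[xB sBA].
  by exists B; rewrite ?BL ?mB.
by case/and3P=> _ _ /subsetP; apply.
Qed.

Lemma leaves_partition L : is_index_tree L -> set_partition (leaves L).
Proof.
case/index_treeP => L0 LT lamL covL; apply/and3P; split.
- rewrite eqEsubset subsetT; apply/subsetP => x _.
  by case: (covL setT x LT (in_setT x)) => B BL /andP[xB _]; apply/bigcupP; exists B.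
- apply/trivIsetP => A B AL BL neAB.
  have AL' := leaves_mem AL; have BL' := leaves_mem BL.
  case/or3P: (lamL A B AL' BL') => // [sAB|sBA].
    by case/negP: (leaf_minimal BL AL'); rewrite properEneq neAB.
  by case/negP: (leaf_minimal AL BL'); rewrite properEneq eq_sym neAB.
- by apply: contra L0 => /leaves_mem.
Qed.

Lemma leaves_Ocontr T v : v \in nonleaves T -> leaves (Ocontr T v) = leaves T.
Proof.
rewrite nonleavesE => /andP[vT nmv]; apply/setP => B; rewrite !leavesE in_setD1.
have [-> /=|neBv /=] := eqVneq B v; first by rewrite (negbTE nmv) andbF.
case BT: (B \in T) => //=; apply/minimalP/minimalP => mB C CT sCB; last first.
  by apply: mB; move: CT; rewrite in_setD1 => /andP[].
have [eCv|neCv] := eqVneq C v; last by apply: mB; rewrite // in_setD1 neCv.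
case: (not_minimal_proper nmv) => D DT pDv.
have eDB : D = B.
  apply: mB; first by rewrite in_setD1 DT proper_neq.
  by rewrite eCv in sCB; apply: subset_trans sCB; apply: proper_sub.
by move: pDv; rewrite eDB -eCv properE sCB andbF.
Qed.

Lemma nonleaves_Ocontr T v :
  v \in nonleaves T -> nonleaves (Ocontr T v) = nonleaves T :\ v.
Proof.
move=> vN; apply/setP => B; rewrite /nonleaves (leaves_Ocontr vN) !inE.
by case: (B == v); rewrite ?andbF.
Qed.

Lemma index_tree_Ocontr T v : is_index_tree T -> v \in nonleaves T -> v != setT ->
  is_index_tree (Ocontr T v).
Proof.
case/index_treeP => T0 TT lamT covT vN vT; apply/index_treeP; split.
- by rewrite in_setD1 negb_and T0 orbT.
- by rewrite in_setD1 eq_sym vT TT.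
- by move=> A B /setD1P[_ AT] /setD1P[_ BT]; apply: lamT.
- by move=> A x; rewrite (leaves_Ocontr vN) => /setD1P[_ AT]; apply: covT.
Qed.

Definition prune T v := [set B in T | ~~ (B \proper v)].

Lemma leaves_prune T v : is_index_tree T -> v \in T -> forall B,
  (B \in leaves (prune T v)) = (B == v) || (B \in leaves T) && ~~ (B \proper v).
Proof.
case/index_treeP => T0 _ lamT _ vT B; rewrite !leavesE !inE.
have [-> /=|neBv /=] := eqVneq B v.
  rewrite vT properxx; apply/minimalP => C /setIdP[_ npCv] sCv.
  by apply/eqP; move: npCv; rewrite properEneq sCv andbT negbK.
case BT: (B \in T) => //=; case pBv: (B \proper v); rewrite ?andbF //= andbT.
apply/minimalP/minimalP => mB C CT sCB; last by apply: mB; case/setIdP: CT.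
case pCv: (C \proper v); last by apply: mB; rewrite // inE CT pCv.
case/or3P: (lamT B v BT vT) => [sBv|svB|dBv].
- by move: pBv; rewrite properEneq neBv sBv.
- by move: neBv; rewrite (mB v) ?eqxx // inE vT properxx.
- by move: T0; rewrite -(disjoint_sub0 dBv sCB (proper_sub pCv)) CT.
Qed.

Lemma index_tree_prune T v : is_index_tree T -> v \in T -> is_index_tree (prune T v).
Proof.
move=> Tt vT; have leavesP := leaves_prune Tt vT.
case/index_treeP: Tt => T0 TT lamT covT; apply/index_treeP; split.
- by rewrite inE negb_and T0.
- by rewrite inE TT properE subsetT andbF.
- by move=> A B /setIdP[AT _] /setIdP[BT _]; apply: lamT.
move=> A x /setIdP[AT npAv] xA; case: (covT A x AT xA) => B BL /andP[xB sBA].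
case pBv: (B \proper v); last by exists B; rewrite ?leavesP ?BL ?pBv ?orbT ?xB.
exists v; first by rewrite leavesP eqxx.
have xv : x \in v by apply: (subsetP (proper_sub pBv)).
rewrite xv /=; case/or3P: (lamT A v AT vT) => [sAv|//|dAv].
  by move: npAv; rewrite properEneq sAv andbT negbK => /eqP ->.
by move: (disjointFr dAv xA); rewrite xv.
Qed.

Lemma proper_sub_child T B v : B \in T -> B \proper v ->
  exists2 c, c \in children T v & B \subset c.
Proof.
move=> BT pBv; pose P C := [&& C \in T, B \subset C & C \proper v].
have PB : P B by rewrite /P BT subxx pBv.
have [c /and3P[cT sBc pcv] cmax] := arg_maxnP (fun C => #|C|) PB.
exists c => //; rewrite inE cT pcv; apply/forall_inP => D DT.
apply/implyP => pcD; apply/negP => pDv.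
have := cmax D; rewrite /P DT pDv (subset_trans sBc (proper_sub pcD)) => /(_ isT).
by rewrite /geq /= leqNgt proper_card.
Qed.

Lemma exceptionalP T v : reflect
  (v \in nonleaves T /\ forall B, B \in T -> B \proper v -> B \in leaves T)
  (exceptional T v).
Proof.
rewrite /exceptional.
apply: (iffP andP) => [[vN /subsetP chL]|[vN belowL]]; split=> //.
  move=> B BT pBv; case: (proper_sub_child BT pBv) => c /chL cL sBc.
  suff -> : B = c by [].
  by move: cL; rewrite leavesE => /andP[_ /minimalP mc]; apply: mc.
by apply/subsetP => c /setIdP[cT /andP[pcv _]]; apply: belowL.
Qed.

Lemma Econtr_prune T v : exceptional T v -> Econtr T v = prune T v.
Proof.
case/exceptionalP => _ belowL; apply/setP => B; rewrite !inE.
case BT: (B \in T); rewrite ?andbF //= andbT; case pBv: (B \proper v) => //=.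
apply/negbF/forall_inP => C CT; apply/implyP => pBC; apply/negP => pCv.
by case/negP: (leaf_minimal (belowL C CT pCv) BT).
Qed.

Lemma nonleaves_prune T v : is_index_tree T -> exceptional T v ->
  nonleaves (prune T v) = nonleaves T :\ v.
Proof.
move=> Tt /exceptionalP[vN belowL]; have vT := nonleaves_mem vN.
apply/setP => B; rewrite /nonleaves inE [in RHS]inE (leaves_prune Tt vT) !inE.
have [-> //|_ /=] := eqVneq B v; case BT: (B \in T); rewrite ?andbF ?andbT //.
case pBv: (B \proper v); rewrite /= ?andbT ?andbF //.
by move: (belowL B BT pBv); rewrite leavesE BT => /= ->.
Qed.

End IndexTrees.

Section Contractions.
Variable n : nat.
Implicit Types (T : {set {set 'I_n}}) (B v : {set 'I_n}).

Definition contractible (b : bool) T v :=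
  if b then exceptional T v else (v \in nonleaves T) && (v != setT).

Definition contract (b : bool) T v := if b then Econtr T v else Ocontr T v.

Lemma contractible_nonleaf b T v : contractible b T v -> v \in nonleaves T.
Proof. by case: b => /andP[]. Qed.

Lemma index_tree_contract b T v : is_index_tree T -> contractible b T v ->
  is_index_tree (contract b T v).
Proof.
case: b => Tt cv; last by case/andP: cv; apply: index_tree_Ocontr.
have vT := nonleaves_mem (contractible_nonleaf cv).
by rewrite /= Econtr_prune // index_tree_prune.
Qed.

Lemma nonleaves_contract b T v : is_index_tree T -> contractible b T v ->
  nonleaves (contract b T v) = nonleaves T :\ v.
Proof.
case: b => Tt cv; last by case/andP: cv => vN _; apply: nonleaves_Ocontr.
by rewrite /= Econtr_prune // nonleaves_prune.
Qed.

Lemma refines_contract b T v : is_index_tree T -> contractible b T v ->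
  refines (leaves T) (leaves (contract b T v)).
Proof.
case: b => Tt cv; apply/forall_inP => a aL; apply/existsP; last first.
  by exists a; rewrite /= leaves_Ocontr ?aL ?subxx ?(contractible_nonleaf cv).
have vT := nonleaves_mem (contractible_nonleaf cv).
rewrite /= Econtr_prune //; case pav: (a \proper v).
  by exists v; rewrite (leaves_prune Tt vT) eqxx proper_sub.
by exists a; rewrite (leaves_prune Tt vT) aL pav orbT subxx.
Qed.

Lemma contract_trees b k T v : T \in trees n k.+1 -> contractible b T v ->
  contract b T v \in trees n k.
Proof.
rewrite !inE => /andP[Tt /eqP cardT] cv.
rewrite index_tree_contract // nonleaves_contract //=.
by move: cardT; rewrite (cardsD1 v) (contractible_nonleaf cv) add1n => -[->].
Qed.

End Contractions.

Lemma binary_sum_inj m (b c : 'I_m -> bool) :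
  (\sum_(j < m) b j * 2 ^ j = \sum_(j < m) c j * 2 ^ j)%N -> b =1 c.
Proof.
have sumS k (d : 'I_k.+1 -> bool) : (\sum_(j < k.+1) d j * 2 ^ j =
    d ord0 + 2 * \sum_(j < k) d (lift ord0 j) * 2 ^ j)%N.
  rewrite big_ord_recl muln1 big_distrr; congr (_ + _)%N.
  by apply: eq_bigr => j _; rewrite expnS mulnCA.
elim: m b c => [|m IHm] b c; first by move=> _ [].
rewrite !sumS => bc; have b0 : b ord0 = c ord0.
  by move: bc; case: (b ord0); case: (c ord0) => //= ?; lia.
move=> j; case: (unliftP ord0 j) => [j' ->|->] //.
apply: (IHm (fun j => b (lift ord0 j)) (fun j => c (lift ord0 j))).
by rewrite b0 in bc; lia.
Qed.

Lemma bcode_inj n : injective (@bcode n).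
Proof.
have bcodeE (A : {set 'I_n}) : bcode A = (\sum_(j < n) (j \in A) * 2 ^ j)%N.
  rewrite /bcode big_mkcond; apply: eq_bigr => j _.
  by case: (j \in A); rewrite ?mul1n.
by move=> A B; rewrite !bcodeE => /binary_sum_inj AB; apply/setP.
Qed.

Lemma blt_total n (A B : {set 'I_n}) : A != B -> blt B A = ~~ blt A B.
Proof.
move=> neAB; rewrite /blt ltnNge leq_eqVlt negb_or.
by rewrite (inj_eq (@bcode_inj n)) neAB.
Qed.

Section TwoStepPaths.
Variable n : nat.
Local Notation contraction := (bool * {set 'I_n})%type.
Implicit Types (S T : {set {set 'I_n}}) (B v w : {set 'I_n}) (p q : contraction).

Definition contract_sign (b : bool) : int := if b then -1 else 1.

Definition sgn_in S v : int := (-1) ^+ #|[set B in S | blt B v]|.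

Lemma sgn_inD1 S v w : v \in S -> sgn_in (S :\ v) w = sgn_in S w * (-1) ^+ blt v w.
Proof.
move=> vS; rewrite /sgn_in [in RHS](cardsD1 v) inE vS /= exprD mulrC signrMK.
suff -> : [set B in S :\ v | blt B w] = [set B in S | blt B w] :\ v by [].
by apply/setP => B; rewrite !inE andbA.
Qed.

Lemma sgn_contract b T v w : is_index_tree T -> contractible b T v ->
  sgn (contract b T v) w = sgn_in (nonleaves T :\ v) w.
Proof. by move=> Tt cv; rewrite /sgn nonleaves_contract. Qed.

Definition path2 T T'' (p q : contraction) :=
  [&& contractible p.1 T p.2, contractible q.1 (contract p.1 T p.2) q.2
    & T'' == contract q.1 (contract p.1 T p.2) q.2].

Definition path2_sign T (p q : contraction) : int :=
  contract_sign p.1 * sgn T p.2 * (contract_sign q.1 * sgn (contract p.1 T p.2) q.2).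

Lemma path2_sign_toggle T b v q : is_index_tree T ->
  contractible b T v -> contractible (~~ b) T v ->
  path2_sign T (~~ b, v) q = - path2_sign T (b, v) q.
Proof.
move=> Tt cv cv'; rewrite /path2_sign /=.
rewrite (sgn_contract _ Tt cv) (sgn_contract _ Tt cv').
by case: b {cv cv'} => /=; ring.
Qed.

Lemma path2_sign_swap T p q : is_index_tree T ->
  contractible p.1 T p.2 -> contractible q.1 T q.2 -> p.2 != q.2 ->
  path2_sign T q p = - path2_sign T p q.
Proof.
move=> Tt cp cq nepq.
rewrite /path2_sign (sgn_contract _ Tt cp) (sgn_contract _ Tt cq).
rewrite !sgn_inD1 ?(contractible_nonleaf cp) ?(contractible_nonleaf cq) //.
rewrite (blt_total nepq) -/(sgn_in (nonleaves T) p.2) -/(sgn_in (nonleaves T) q.2).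
by case: (blt p.2 q.2) => /=; ring.
Qed.

Lemma exceptional_OcontrP T v w : v \in nonleaves T -> reflect
  (w \in nonleaves T :\ v /\
     forall B, B \in T -> B != v -> B \proper w -> B \in leaves T)
  (exceptional (Ocontr T v) w).
Proof.
move=> vN; rewrite -(nonleaves_Ocontr vN).
apply: (iffP (exceptionalP _ _)) => -[wN belowL]; split=> // B.
  by move=> BT neBv /(belowL B); rewrite leaves_Ocontr // in_setD1 neBv; apply.
by case/setD1P => neBv BT /(belowL B BT neBv); rewrite leaves_Ocontr.
Qed.

Lemma exceptional_pruneP T v w : is_index_tree T -> exceptional T v -> reflect
  (w \in nonleaves T :\ v /\
     forall B, B \in T -> ~~ (B \proper v) -> B \proper w ->
       (B == v) || (B \in leaves T) && ~~ (B \proper v))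
  (exceptional (prune T v) w).
Proof.
move=> Tt cv; have vT := nonleaves_mem (contractible_nonleaf (b := true) cv).
rewrite -(nonleaves_prune Tt cv).
apply: (iffP (exceptionalP _ _)) => -[wN belowL]; split=> // B.
  by move=> BT npBv /(belowL B); rewrite -leaves_prune // inE BT npBv; apply.
by case/setIdP => BT npBv /(belowL B BT npBv); rewrite leaves_prune.
Qed.

Lemma prune_Ocontr T v w : v \proper w -> prune (Ocontr T v) w = prune (prune T v) w.
Proof.
move=> pvw; apply/setP => B; rewrite !inE.
case pBw: (B \proper w); rewrite /= ?andbF ?andbT //.
have -> : B != v by apply: contraFneq pBw => ->.
have npBv : ~~ (B \proper v) by apply: contraFN pBw => /proper_trans; apply.
by rewrite npBv andbT.
Qed.

Lemma path2_toggleO T T'' v w : is_index_tree T -> v \proper w ->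
  path2 T T'' (false, v) (true, w) -> path2 T T'' (true, v) (true, w).
Proof.
move=> Tt pvw /and3P[/= /andP[vN _] cw /eqP ->].
have [wN belowL] := exceptional_OcontrP w vN cw.
have cv : exceptional T v.
  apply/exceptionalP; split=> // B BT pBv.
  by apply: belowL => //; [apply: proper_neq | apply: proper_trans pvw].
have cw' : exceptional (Econtr T v) w.
  rewrite Econtr_prune //; apply/(exceptional_pruneP w Tt cv).
  split=> // B BT npBv pBw; have [->|neBv] := eqVneq B v; first by [].
  by rewrite belowL ?npBv ?orbT.
apply/and3P; split=> //=.
by rewrite (Econtr_prune cw) (Econtr_prune cw') (Econtr_prune cv) prune_Ocontr.
Qed.

Lemma path2_toggleE T T'' v w : is_index_tree T -> v \proper w ->
  path2 T T'' (true, v) (true, w) -> path2 T T'' (false, v) (true, w).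
Proof.
move=> Tt pvw /and3P[/= cv cw /eqP ->]; have /exceptionalP[vN belowvL] := cv.
have /(exceptional_pruneP w Tt cv)[wN belowwL] : exceptional (prune T v) w.
  by rewrite -Econtr_prune.
have cv' : (v \in nonleaves T) && (v != setT).
  by rewrite vN; apply: contraTneq pvw => ->; rewrite properE subsetT andbF.
have cw' : exceptional (Ocontr T v) w.
  apply/(exceptional_OcontrP w vN); split=> // B BT neBv pBw.
  case pBv: (B \proper v); first exact: belowvL.
  case/orP: (belowwL B BT (negbT pBv) pBw) => [/eqP eBv|/andP[]//].
  by rewrite eBv eqxx in neBv.
apply/and3P; split=> //=.
by rewrite (Econtr_prune cw) (Econtr_prune cw') (Econtr_prune cv) prune_Ocontr.
Qed.

Lemma path2_toggle T T'' b v w : is_index_tree T -> v \proper w ->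
  path2 T T'' (b, v) (true, w) -> path2 T T'' (~~ b, v) (true, w).
Proof. by case: b; [apply: path2_toggleE | apply: path2_toggleO]. Qed.

Lemma path2_swapOO T T'' v w :
  path2 T T'' (false, v) (false, w) -> path2 T T'' (false, w) (false, v).
Proof.
move=> /and3P[/= /andP[vN vT] /andP[wN wT] /eqP ->].
rewrite nonleaves_Ocontr // in wN; case/setD1P: wN => nwv wN.
apply/and3P; split=> /=; first by rewrite wN wT.
  by rewrite nonleaves_Ocontr // in_setD1 eq_sym nwv vN vT.
by rewrite /Ocontr !setDDl setUC.
Qed.

Lemma path2_swapOE T T'' v w : is_index_tree T -> ~~ (v \proper w) ->
  path2 T T'' (false, v) (true, w) -> path2 T T'' (true, w) (false, v).
Proof.
move=> Tt npvw /and3P[/= /andP[vN vT] cw /eqP ->].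
have [/setD1P[nwv wN] belowL] := exceptional_OcontrP w vN cw.
have cw' : exceptional T w.
  apply/exceptionalP; split=> // B BT pBw; apply: belowL => //.
  by apply: contraNneq npvw => <-.
apply/and3P; split=> //=.
  by rewrite Econtr_prune // nonleaves_prune // in_setD1 eq_sym nwv vN vT.
rewrite (Econtr_prune cw) (Econtr_prune cw').
by apply/eqP/setP => B; rewrite !inE andbA.
Qed.

Lemma path2_swapEO T T'' v w : is_index_tree T ->
  path2 T T'' (true, v) (false, w) -> path2 T T'' (false, w) (true, v).
Proof.
move=> Tt /and3P[/= cv /andP[wN wT] /eqP ->]; have /exceptionalP[vN belowL] := cv.
rewrite Econtr_prune // nonleaves_prune // in wN; case/setD1P: wN => nwv wN.
have cv' : exceptional (Ocontr T w) v.
  apply/(exceptional_OcontrP v wN); split=> [|B BT _]; last exact: belowL.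
  by rewrite in_setD1 eq_sym nwv vN.
apply/and3P; split=> //=; first by rewrite wN wT.
rewrite (Econtr_prune cv) (Econtr_prune cv').
by apply/eqP/setP => B; rewrite !inE andbA.
Qed.

Lemma path2_swapEE T T'' v w : is_index_tree T -> ~~ (v \proper w) ->
  path2 T T'' (true, v) (true, w) -> path2 T T'' (true, w) (true, v).
Proof.
move=> Tt npvw /and3P[/= cv cw /eqP ->]; have /exceptionalP[vN belowvL] := cv.
have : exceptional (prune T v) w by rewrite -Econtr_prune.
case/(exceptional_pruneP w Tt cv) => /setD1P[nwv wN] belowwL.
have cw' : exceptional T w.
  apply/exceptionalP; split=> // B BT pBw.
  case pBv: (B \proper v); first exact: belowvL.
  case/orP: (belowwL B BT (negbT pBv) pBw) => [/eqP eBv|/andP[]//].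
  by rewrite -eBv pBw in npvw.
have cv' : exceptional (Econtr T w) v.
  rewrite Econtr_prune //; apply/(exceptional_pruneP v Tt cw').
  by split=> [|B BT npBw pBv]; rewrite ?belowvL ?npBw ?orbT // in_setD1 eq_sym nwv vN.
apply/and3P; split=> //=.
rewrite (Econtr_prune cw) (Econtr_prune cv') (Econtr_prune cw') (Econtr_prune cv).
apply/eqP/setP => B; rewrite !inE.
by case: (B \in T); case: (B \proper v); case: (B \proper w).
Qed.

Lemma path2_swap T T'' p q : is_index_tree T -> ~~ (q.1 && (p.2 \proper q.2)) ->
  path2 T T'' p q -> path2 T T'' q p.
Proof.
case: p q => [[] v] [[] w] Tt /= npvw.
- exact: path2_swapEE.
- exact: path2_swapEO.
- exact: path2_swapOE.
- exact: path2_swapOO.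
Qed.

Lemma path2_Ebelow T T'' p q : p.1 -> q.2 \proper p.2 -> ~~ path2 T T'' p q.
Proof.
case: p => [[] v] //= _ pwv; apply/negP => /and3P[/= cv /contractible_nonleaf + _].
by rewrite Econtr_prune // => /nonleaves_mem; rewrite inE pwv andbF.
Qed.

Lemma path2_neq T T'' p q : is_index_tree T -> path2 T T'' p q -> p.2 != q.2.
Proof.
move=> Tt /and3P[cp /contractible_nonleaf + _].
by rewrite nonleaves_contract // => /setD1P[]; rewrite eq_sym.
Qed.

Lemma path2_toggle_opp T T'' b v w : is_index_tree T -> v \proper w ->
  path2 T T'' (b, v) (true, w) ->
  path2 T T'' (~~ b, v) (true, w) /\
  path2_sign T (~~ b, v) (true, w) = - path2_sign T (b, v) (true, w).
Proof.
move=> Tt pvw path_bv; have path_nbv := path2_toggle Tt pvw path_bv.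
split=> //; apply: path2_sign_toggle => //.
  by case/and3P: path_bv.
by case/and3P: path_nbv.
Qed.

Lemma path2_swap_opp T T'' p q : is_index_tree T -> ~~ (q.1 && (p.2 \proper q.2)) ->
  path2 T T'' p q -> path2 T T'' q p /\ path2_sign T q p = - path2_sign T p q.
Proof.
move=> Tt npq path_pq; have path_qp := path2_swap Tt npq path_pq.
split=> //; apply: path2_sign_swap (path2_neq Tt path_pq) => //.
  by case/and3P: path_pq.
by case/and3P: path_qp.
Qed.

(* Pairs [(p, q)] with [q] strictly below an E-contracted [p] are fixed points,
   harmlessly since by [path2_Ebelow] they are not paths. *)
Definition path2_partner (x : contraction * contraction) :
    contraction * contraction :=
  let: (p, q) := x in
  if q.1 && (p.2 \proper q.2) then ((~~ p.1, p.2), q)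
  else if p.1 && (q.2 \proper p.2) then x else (q, p).

Lemma path2_partnerK : involutive path2_partner.
Proof.
case=> [[b v] [c w]]; rewrite /path2_partner /=.
by case: b; case: c; case pvw: (v \proper w); case pwv: (w \proper v);
  rewrite /= ?pvw ?pwv.
Qed.

Lemma path2_partner_opp T T'' x : is_index_tree T -> path2 T T'' x.1 x.2 ->
  path2 T T'' (path2_partner x).1 (path2_partner x).2 /\
  path2_sign T (path2_partner x).1 (path2_partner x).2 = - path2_sign T x.1 x.2.
Proof.
case: x => [[b v] [c w]] Tt /= path_x; rewrite /path2_partner /=.
case: ifP => [/andP[/= c1 pvw]|npvw].
  by move: path_x; rewrite c1; apply: path2_toggle_opp.
case: ifP => [/andP[b1 pwv]|_]; last by apply: path2_swap_opp; rewrite ?npvw.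
by rewrite (negbTE (@path2_Ebelow T T'' (b, v) (c, w) b1 pwv)) in path_x.
Qed.

Definition dcoef T T' : int :=
  \sum_(p | contractible p.1 T p.2 && (T' == contract p.1 T p.2))
    contract_sign p.1 * sgn T p.2.

Lemma dcoef_mul_sum k T T'' : T \in trees n k.+2 ->
  \sum_(T' in trees n k.+1) dcoef T T' * dcoef T' T'' =
  \sum_(x | path2 T T'' x.1 x.2) path2_sign T x.1 x.2.
Proof.
move=> Ttr; rewrite [RHS]big_mkcond.
rewrite -(pair_bigA _ (fun p q => if path2 T T'' p q then path2_sign T p q else 0)) /=.
under eq_bigr do
  rewrite /dcoef !(big_mkcond (fun p => contractible _ _ _ && _)) big_distrlr /=.
rewrite exchange_big; apply: eq_bigr => p _.
rewrite exchange_big; apply: eq_bigr => q _ /=.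
case cp: (contractible p.1 T p.2) => /=; last first.
  by rewrite /path2 cp big1 // => T' _; rewrite mul0r.
rewrite (bigD1 (contract p.1 T p.2)) ?contract_trees //= eqxx big1 ?addr0; last first.
  by move=> T' /andP[_ /negbTE ->]; rewrite mul0r.
by rewrite /path2 cp /=; case: (_ && _); rewrite ?mulr0.
Qed.

Lemma dcoef_square k T T'' : T \in trees n k.+2 ->
  \sum_(T' in trees n k.+1) dcoef T T' * dcoef T' T'' = 0.
Proof.
move=> Ttr; have /setIdP[Tt _] := Ttr.
rewrite dcoef_mul_sum //; apply: sum_involution_opp path2_partnerK _ => x.
exact: path2_partner_opp.
Qed.

Lemma dcoef_step T T' : is_index_tree T -> dcoef T T' != 0 ->
  is_index_tree T' /\ refines (leaves T) (leaves T').
Proof.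
move=> Tt; rewrite /dcoef.
pose P p := contractible p.1 T p.2 && (T' == contract p.1 T p.2).
case: (pickP P) => [p|noP].
  by case/andP=> cp /eqP -> _; rewrite index_tree_contract ?refines_contract.
by rewrite big_pred0 ?eqxx.
Qed.

End TwoStepPaths.

Section Preadditive.
Variable C : preadditive.

Definition mcompl (a b c : C) (g : mor a b) (f : mor b c) := mcomp f g.
Definition mcompr (a b c : C) (f : mor b c) (g : mor a b) := mcomp f g.

Fact mcompl_is_zmod_morphism (a b c : C) (g : mor a b) :
  zmod_morphism (mcompl (c := c) g).
Proof.
by move=> f1 f2; apply: (addIr (mcomp f2 g)); rewrite /mcompl -comp_addl !subrK.
Qed.
HB.instance Definition _ a b c g :=
  GRing.isZmodMorphism.Build _ _ _ (@mcompl_is_zmod_morphism a b c g).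

Fact mcompr_is_zmod_morphism (a b c : C) (f : mor b c) :
  zmod_morphism (mcompr (a := a) f).
Proof.
by move=> g1 g2; apply: (addIr (mcomp f g2)); rewrite /mcompr -comp_addr !subrK.
Qed.
HB.instance Definition _ a b c f :=
  GRing.isZmodMorphism.Build _ _ _ (@mcompr_is_zmod_morphism a b c f).

Lemma mcompMzl (a b c : C) (f : mor b c) (g : mor a b) z :
  mcomp (f *~ z) g = mcomp f g *~ z.
Proof. exact: raddfMz (mcompl (c := c) g) z f. Qed.

Lemma mcompMzr (a b c : C) (f : mor b c) (g : mor a b) z :
  mcomp f (g *~ z) = mcomp f g *~ z.
Proof. exact: raddfMz (mcompr (a := a) f) z g. Qed.

Lemma dcompE n (F : {set {set 'I_n}} -> C) (phi : forall A B, mor (F A) (F B))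
    T T' :
  dcomp phi T T' = phi (leaves T) (leaves T') *~ dcoef T T'.
Proof.
rewrite /dcomp /dcoef -!mulrz_sumr -mulrzDr; congr (_ *~ _).
rewrite [RHS]big_mkcond -(pair_bigA _ (fun b v =>
  if contractible b T v && (T' == contract b T v)
  then contract_sign b * sgn T v else 0)).
rewrite big_bool /= addrC; congr (_ + _); rewrite big_mkcond; apply: eq_bigr => v _ /=.
  by rewrite andbA mul1r.
by case exc: (exceptional T v); rewrite ?andbF //= mulN1r; case/andP: exc => ->.
Qed.

End Preadditive.

Unset Implicit Arguments.

Theorem lemma6p8 (C : preadditive) (n : nat)
    (F : {set {set 'I_n}} -> C) (phi : forall A B, mor (F A) (F B)) :
  strict_system phi ->
  forall (k : nat) (T T'' : {set {set 'I_n}}),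
    T \in trees n k.+2 -> T'' \in trees n k ->
    \sum_(T' in trees n k.+1) mcomp (dcomp phi T' T'') (dcomp phi T T') = 0.
Proof.
move=> [_ phi_comp] k T T'' Ttr _; have /setIdP[Tt _] := Ttr.
have entryE T' : T' \in trees n k.+1 ->
    mcomp (dcomp phi T' T'') (dcomp phi T T') =
    phi (leaves T) (leaves T'') *~ (dcoef T T' * dcoef T' T'').
  move=> _; rewrite !dcompE mcompMzl mcompMzr -mulrzA.
  have [->|] := eqVneq (dcoef T T' * dcoef T' T'') 0; first by rewrite !mulr0z.
  rewrite mulf_eq0 negb_or => /andP[/(dcoef_step Tt)[T't TT']].
  move=> /(dcoef_step T't)[T''t T'T''].
  by rewrite phi_comp ?leaves_partition.
by rewrite (eq_bigr _ entryE) -mulrz_sumr dcoef_square // mulr0z.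
Qed.
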